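(* Let $p$ be an odd prime, $G=\mu_p\times\mu_p$, and let $\mathcal{P}$ be a fusion partition of $G$ having exactly $p$ singular sets and such that every non-singular set has exactly two elements. Then there exist $\alpha,\beta\in G$ such that the singular sets are exactly $\{\alpha^i\}$, $i=0,\dots,p-1$, and the non-singular sets are exactly the sets $\{\alpha^i\beta^j,\alpha^i\beta^{-j}\}$ with $0\le i\le p-1$ and $1\le j\le p-1$.
   Context: A unital partition of a finite commutative group $G$ is a partition $G=\{1\}\sqcup A_0\sqcup\dots\sqcup A_s$ such that, with $a_i=\sum_{x\in A_i}x\in\mathbb{Z}[G]$, the $\mathbb{Z}$-span of $1$ and the $a_i$ is closed under multiplication in $\mathbb{Z}[G]$. It is a fusion partition if moreover (1) for each member $A_i$ the set $\{x^{-1}:x\in A_i\}$ is a member, denoted $A_{i^*}$, and (2) writing $a_ia_j=\sum_kn^k_{i,j}a_k$, one has $n^k_{i,j}|A_k|=n^{j^*}_{i,k^*}|A_{j^*}|$. A member of a partition is singular if it has exactly one element (the set $\{1\}$ counts as singular). *)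

From HB Require Import structures.
From mathcomp Require Import all_boot all_order all_algebra.
Set Implicit Arguments. Unset Strict Implicit. Unset Printing Implicit Defensive.
Import GRing.Theory.
Local Open Scope ring_scope.

(* The group mu_p x mu_p is modelled additively as 'Z_p * 'Z_p
   (mu_p is cyclic of order p, hence isomorphic to Z/pZ); the identity
   "1" of G is 0, x^{-1} is -x and alpha^i beta^j is i*alpha + j*beta. *)
Definition GT (p : nat) : Type := ('Z_p * 'Z_p)%type.
HB.instance Definition _ (p : nat) := GRing.Zmodule.on (GT p).
HB.instance Definition _ (p : nat) := Finite.on (GT p).

Section GroupRing.
Variable G : finZmodType.

(* Elements of Z[G] are represented as functions G -> int. *)
Definition chi (A : {set G}) : G -> int := fun z => (z \in A)%:Z.

Definition gmul (f g : G -> int) : G -> int :=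
  fun z => \sum_(x : G) f x * g (z - x).

Definition is_part_with_one (P : {set {set G}}) : Prop :=
  partition P [set: G] /\ [set 0 : G] \in P.

(* unital: the Z-span of 1 and the a_i (i.e. of the a_A, A in P, since
   {1} is a member) is closed under multiplication *)
Definition unital_partition (P : {set {set G}}) : Prop :=
  is_part_with_one P /\
  forall A B, A \in P -> B \in P ->
    exists c : {set G} -> int,
      forall z, gmul (chi A) (chi B) z = \sum_(C in P) c C * chi C z.

Definition setinv (A : {set G}) : {set G} := [set - x | x in A].

(* structure constant n^C_{A,B}: coefficient of a_C in a_A a_B, read off
   at an element of C (well defined for unital partitions) *)
Definition sconst (A B C : {set G}) : int :=
  gmul (chi A) (chi B) (odflt 0 [pick x in C]).

Definition fusion_partition (P : {set {set G}}) : Prop :=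
  unital_partition P /\
  (forall A, A \in P -> setinv A \in P) /\
  (forall A B C, A \in P -> B \in P -> C \in P ->
     sconst A B C * #|C|%:Z = sconst A (setinv C) (setinv B) * #|setinv B|%:Z).

Definition singular_sets (P : {set {set G}}) : {set {set G}} :=
  [set A in P | #|A| == 1%N].

End GroupRing.

From HB Require Import structures.
From mathcomp Require Import all_boot all_order all_algebra.
From mathcomp Require Import fingroup cyclic.
Import GRing.Theory FinRing.Theory.
Local Open Scope ring_scope.
Set Implicit Arguments. Unset Strict Implicit.

(* Its key consequence is that the coefficients of
   a_A a_B are constant on blocks, so a decomposition z = a + b with a in A,
   b in B transfers to every element of the block of z (transfer_sum).  For
   any finite abelian group this makes the singular elements a subgroup S,
   and, when the other blocks are pairs and #|G| is odd, it shows that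
   translation by S permutes blocks, that the two elements of a pair add up
   to an element of S, and that blocks of the form {x, -x} are closed under
   addition.  In Z/p x Z/p, S is the cyclic group generated by some alpha;
   halving a pair {y, y'} about (y + y')/2 in S yields beta with
   block {beta, -beta}, hence every beta *+ j has block {beta *+ j, -beta *+ j},
   and translating these by S exhausts all non-singular blocks. *)

Section FiniteZmodArith.
Variable G : finZmodType.
Implicit Types (x y : G) (k : nat).

Lemma mulrn_card x : x *+ #|G| = 0.
Proof. by rewrite -zmodXgE -cardsT expg_cardG ?inE. Qed.

Let card_gt0 : (0 < #|G|)%N.
Proof. by apply/card_gt0P; exists 0. Qed.

Lemma oppr_mulrn x : - x = x *+ #|G|.-1.
Proof.
by apply/eqP; rewrite eq_sym -addr_eq0 addrC -mulrS prednK ?mulrn_card.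
Qed.

Lemma mulrn_coprime_inv k x : coprime k #|G| ->
  exists a : nat, x = - (x *+ k *+ a).
Proof.
move=> cop; have [a _] := Bezoutl k card_gt0.
rewrite gcdnC (eqP cop) => /dvdnP [m hm].
exists a; apply/eqP; rewrite -addr_eq0 -mulrnA -mulrS mulnC -addn1 addnC hm.
by rewrite mulnC mulrnA mulrn_card mul0rn.
Qed.

Lemma mulrn_coprime_inj k : coprime k #|G| -> injective (fun x : G => x *+ k).
Proof.
move=> cop x y /= eqxy; apply/eqP; rewrite -subr_eq0.
have [a ->] := mulrn_coprime_inv (x - y) cop.
by rewrite mulrnBl eqxy subrr mul0rn oppr0.
Qed.

End FiniteZmodArith.

Lemma gmul_chi (G : finZmodType) (A B : {set G}) (z : G) :
  gmul (chi A) (chi B) z = #|[set a in A | z - a \in B]|%:Z.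
Proof.
rewrite /gmul -sum1_card (big_morph Posz PoszD (erefl 0%:Z)) [RHS]big_mkcond /=.
by apply: eq_bigr => x _; rewrite /chi !inE; case: (x \in A); case: (z - x \in B).
Qed.

Section UnitalPartition.
Variables (G : finZmodType) (P : {set {set G}}).
Hypothesis unitalP : unital_partition P.

Local Notation blk := (pblock P).

Let partP : partition P [set: G].
Proof. by case: unitalP => [[]]. Qed.

Let trivP : trivIset P.
Proof. by case/and3P: partP. Qed.

Let coverP x : x \in cover P.
Proof. by case/and3P: partP => /eqP -> _ _; rewrite inE. Qed.

Lemma blk_mem x : blk x \in P.
Proof. exact: pblock_mem. Qed.

Lemma mem_blk x : x \in blk x.
Proof. by rewrite mem_pblock. Qed.

Lemma blk_eq B x : B \in P -> x \in B -> blk x = B.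
Proof. exact: def_pblock. Qed.

Lemma same_blk x t : t \in blk x -> blk t = blk x.
Proof. exact: same_pblock. Qed.

Lemma gmul_blk_const A B z t : A \in P -> B \in P -> t \in blk z ->
  gmul (chi A) (chi B) t = gmul (chi A) (chi B) z.
Proof.
move=> PA PB tz; case: unitalP => _ /(_ A B PA PB) [c decomp].
suff coef w : gmul (chi A) (chi B) w = c (blk w) by rewrite !coef (same_blk tz).
rewrite decomp (bigD1 (blk w)) ?blk_mem //= big1 ?addr0.
  by rewrite /chi mem_blk mulr1.
move=> C /andP [PC nC]; rewrite /chi; case wC: (w \in C); last by rewrite mulr0.
by move: nC; rewrite (blk_eq PC wC) eqxx.
Qed.

Lemma transfer_sum A B z t a0 : A \in P -> B \in P -> t \in blk z ->
  a0 \in A -> z - a0 \in B -> exists2 a, a \in A & t - a \in B.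
Proof.
move=> PA PB tz a0A za0B.
have := gmul_blk_const PA PB tz; rewrite !gmul_chi => -[count_eq].
have : (0 < #|[set a in A | (t - a)%R \in B]|)%N.
  by rewrite count_eq card_gt0; apply/set0Pn; exists a0; rewrite inE a0A.
by rewrite card_gt0 => /set0Pn [a]; rewrite inE => /andP [aA taB]; exists a.
Qed.

Definition singular x := #|blk x| == 1%N.

Lemma singular_blk x : singular x -> blk x = [set x].
Proof.
case/cards1P => y hy; move: (mem_blk x); rewrite hy inE => /eqP ->.
by rewrite -hy.
Qed.

Lemma singularP x : (forall t, t \in blk x -> t = x) -> singular x.
Proof.
move=> blk_x; apply/cards1P; exists x; apply/setP => t; rewrite inE.
by apply/idP/eqP => [/blk_x | ->]; last exact: mem_blk.
Qed.

Lemma singular0 : singular 0.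
Proof.
by case: unitalP => [[_ P0] _]; rewrite /singular (blk_eq P0 (set11 0)) cards1.
Qed.

Lemma singularD x y : singular x -> singular y -> singular (x + y).
Proof.
move=> sx sy; apply: singularP => t txy.
have := transfer_sum (blk_mem x) (blk_mem y) txy (mem_blk x).
rewrite addrAC subrr add0r => /(_ (mem_blk y)) [a].
rewrite (singular_blk sx) (singular_blk sy) !inE => /eqP -> /eqP <-.
by rewrite addrC subrK.
Qed.

Lemma singularMn x n : singular x -> singular (x *+ n).
Proof.
by move=> sx; elim: n => [|n IH]; rewrite ?mulr0n ?singular0 // mulrS singularD.
Qed.

Lemma singularN x : singular x -> singular (- x).
Proof. by rewrite oppr_mulrn; apply: singularMn. Qed.

Lemma singularB x y : singular x -> singular y -> singular (x - y).
Proof. by move=> sx sy; rewrite singularD // singularN. Qed.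

Lemma nonsingularD x s : singular s -> ~~ singular x -> ~~ singular (x + s).
Proof. by move=> ss; apply: contra => sxs; rewrite -(addrK s x) singularB. Qed.

Lemma nonsingularMn k x : coprime k #|G| -> ~~ singular x -> ~~ singular (x *+ k).
Proof.
move=> cop; apply: contra => skx.
by have [a ->] := mulrn_coprime_inv x cop; rewrite singularN // singularMn.
Qed.

Lemma singular_setsE : singular_sets P = [set [set x] | x in [set x | singular x]].
Proof.
apply/setP => A; rewrite /singular_sets inE.
apply/andP/imsetP => [[PA /cards1P [x Ax]] | [x]].
  exists x => //; rewrite inE /singular (blk_eq PA (_ : x \in A)) ?Ax ?cards1 //.
  exact: set11.
by rewrite inE => sx ->; rewrite -(singular_blk sx) blk_mem; split.
Qed.

Lemma card_singular : #|[set x | singular x]| = #|singular_sets P|.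
Proof. by rewrite singular_setsE card_imset //; apply: set1_inj. Qed.

End UnitalPartition.

Section PairPartition.
Variables (G : finZmodType) (P : {set {set G}}).
Hypothesis unitalP : unital_partition P.
Hypothesis pairP : forall A, A \in P -> #|A| != 1%N -> #|A| = 2%N.
Hypothesis oddG : odd #|G|.

Local Notation blk := (pblock P).
Local Notation singular := (singular P).

Lemma nonsingular_pair x : ~~ singular x -> exists2 t, t != x & blk x = [set x; t].
Proof.
move=> nsx; have /eqP := pairP (blk_mem unitalP x) nsx.
case/cards2P => a [b [ab blk_x]].
move: (mem_blk unitalP x); rewrite blk_x !inE => /orP [] /eqP ->.
  by exists b; rewrite // eq_sym.
by exists a; rewrite // setUC.
Qed.

Lemma blk_pairE u v : ~~ singular u -> v \in blk u -> v != u -> blk u = [set u; v].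
Proof.
move=> nsu vu vnu; have [t _ blk_u] := nonsingular_pair nsu.
by move: vu; rewrite blk_u !inE (negbTE vnu) /= => /eqP ->.
Qed.

Lemma blk_translate s y y' : singular s -> ~~ singular y -> y' \in blk y ->
  y' + s \in blk (y + s).
Proof.
move=> ss nsy yy.
have [t nt blk_ys] := nonsingular_pair (nonsingularD unitalP ss nsy).
have tys : t \in blk (y + s) by rewrite blk_ys !inE eqxx orbT.
have := transfer_sum unitalP (blk_mem unitalP s) (blk_mem unitalP y) tys
  (mem_blk unitalP s).
rewrite addrK => /(_ (mem_blk unitalP y)) [a].
rewrite (singular_blk unitalP ss) inE => /eqP ->.
have [y2 _ blk_y] := nonsingular_pair nsy.
rewrite blk_y !inE => /orP [/eqP t_y | /eqP t_y2].
  by move: nt; rewrite -t_y subrK eqxx.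
move: yy; rewrite blk_y !inE => /orP [/eqP -> | /eqP ->].
  exact: mem_blk.
by rewrite -t_y2 subrK.
Qed.

Let coprime2G : coprime 2 #|G|.
Proof. by rewrite coprime2n. Qed.

Let double_inj : injective (fun x : G => x *+ 2).
Proof. exact: mulrn_coprime_inj. Qed.

Lemma pair_sum_singular u v : ~~ singular u -> v \in blk u -> v != u ->
  singular (u + v).
Proof.
move=> nsu vu vnu.
have blk_u := blk_pairE nsu vu vnu.
apply: (singularP unitalP) => w wuv.
have := gmul_blk_const unitalP (blk_mem unitalP u) (blk_mem unitalP u) wuv.
rewrite !gmul_chi => -[count_eq].
(* u + v has both of its decompositions inside blk u, hence so does w;
   comparing them forces w = u + v. *)
have full : [set a in blk u | u + v - a \in blk u] = blk u.
  apply/setP => a; rewrite !inE blk_u !inE andb_idr //.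
  by case/orP => /eqP ->; rewrite ?addrK ?(addrC u) ?addrK eqxx ?orbT.
have all_w : [set a in blk u | w - a \in blk u] = blk u.
  apply/eqP; rewrite eqEcard count_eq full leqnn andbT.
  by apply/subsetP => a; rewrite inE => /andP [].
have : u \in [set a in blk u | w - a \in blk u] by rewrite all_w mem_blk.
have : v \in [set a in blk u | w - a \in blk u] by rewrite all_w.
rewrite !inE blk_u !inE !eqxx orbT /= !subr_eq.
case/orP => /eqP w_v; case/orP => /eqP w_u //.
- by move: vnu; rewrite (@double_inj v u) ?eqxx // /= !mulr2n -w_v -w_u.
- by move: vnu; rewrite (addrI v (etrans (esym w_v) w_u)) eqxx.
Qed.

Lemma opp_neq x : ~~ singular x -> - x != x.
Proof.
move=> nsx; apply: contraNneq (nonsingularMn unitalP coprime2G nsx) => Nx.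
by rewrite mulr2n -{2}Nx subrr singular0.
Qed.

Lemma blk_opp x : - x \in blk x -> ~~ singular x -> blk x = [set x; - x].
Proof. by move=> Nx nsx; apply: blk_pairE => //; apply: opp_neq. Qed.

Lemma blk_translate_opp s x : singular s -> ~~ singular x -> - x \in blk x ->
  blk (s + x) = [set s + x; s - x].
Proof.
move=> ss nsx Nx; apply: blk_pairE.
- by rewrite addrC nonsingularD.
- by rewrite addrC [s + x]addrC; apply: blk_translate.
- by rewrite (inj_eq (addrI s)) opp_neq.
Qed.

Lemma blk_opp_add x y : - x \in blk x -> - y \in blk y ->
  ~~ singular x -> ~~ singular y -> ~~ singular (x + y) ->
  - (x + y) \in blk (x + y).
Proof.
move=> Nx Ny nsx nsy nsxy; have [t nt blk_xy] := nonsingular_pair nsxy.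
have txy : t \in blk (x + y) by rewrite blk_xy !inE eqxx orbT.
have := transfer_sum unitalP (blk_mem unitalP x) (blk_mem unitalP y) txy
  (mem_blk unitalP x).
rewrite addrAC subrr add0r => /(_ (mem_blk unitalP y)) [a].
have sum_t := pair_sum_singular nsxy txy nt.
have ns2x := nonsingularMn unitalP coprime2G nsx.
have ns2y := nonsingularMn unitalP coprime2G nsy.
rewrite (blk_opp Nx nsx) (blk_opp Ny nsy) !inE !subr_eq.
case/orP => /eqP -> /orP [] /eqP t_def.
- by move: nt; rewrite t_def addrC eqxx.
- by move: sum_t; rewrite t_def addrA addrK -mulr2n (negbTE ns2x).
- by move: sum_t; rewrite t_def addrC addrA subrK -mulr2n (negbTE ns2y).
- by rewrite opprD addrC -t_def.
Qed.

End PairPartition.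

Section ZpSquare.
Variable p : nat.
Hypothesis p_prime : prime p.

Lemma card_GT : #|{: GT p}| = (p * p)%N.
Proof. by rewrite /GT card_prod card_ord Zp_cast // prime_gt1. Qed.

Lemma coprime_card_GT k : ~~ (p %| k)%N -> coprime k #|{: GT p}|.
Proof. by rewrite card_GT coprimeMr andbb coprime_sym prime_coprime. Qed.

Lemma ndvdn_lt k : (0 < k)%N -> (k < p)%N -> ~~ (p %| k)%N.
Proof. by move=> k_gt0 k_lt; apply/negP => /(dvdn_leq k_gt0); rewrite leqNgt k_lt. Qed.

Lemma mulrn_ord_inj (x : GT p) (i j : nat) : x != 0 -> (i < p)%N -> (j < p)%N ->
  x *+ i = x *+ j -> i = j.
Proof.
move=> nx; wlog le_ij : i j / (i <= j)%N.
  by move=> wlog_ij ip jp eqx; case: (leqP i j) => [|/ltnW] le;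
    [exact: wlog_ij | apply/esym/wlog_ij].
move=> ip jp eqx; apply/eqP; rewrite eqn_leq le_ij /= -subn_eq0.
apply: contraNT nx; rewrite -lt0n => ji_gt0.
have cop := coprime_card_GT (ndvdn_lt ji_gt0 (leq_ltn_trans (leq_subr i j) jp)).
by apply/eqP/(mulrn_coprime_inj cop); rewrite /= mul0rn mulrnBr // eqx subrr.
Qed.

End ZpSquare.

Section Theorem41.
Variables (p : nat) (P : {set {set GT p}}).
Hypotheses (p_prime : prime p) (p_odd : odd p).
Hypothesis unitalP : unital_partition P.
Hypothesis pairP : forall A, A \in P -> #|A| != 1%N -> #|A| = 2%N.
Hypothesis card_singP : #|singular_sets P| = p.

Local Notation blk := (pblock P).
Local Notation singular := (singular P).

Let oddG : odd #|{: GT p}|.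
Proof. by rewrite card_GT // oddM andbb. Qed.

Let coprime2G : coprime 2 #|{: GT p}|.
Proof. by rewrite coprime2n. Qed.

Let nonsingular_mulrn k x : ~~ (p %| k)%N -> ~~ singular x -> ~~ singular (x *+ k).
Proof. by move=> ndvd; apply: nonsingularMn; rewrite // coprime_card_GT. Qed.

Lemma singular_multiples : exists2 a : GT p, a != 0 &
  [set x | singular x] = [set a *+ (nat_of_ord i) | i : 'I_p].
Proof.
have card_S : #|[set x | singular x]| = p by rewrite card_singular.
have [a sa a0] : exists2 a, singular a & a != 0.
  have : (1 < #|[set x | singular x]|)%N by rewrite card_S prime_gt1.
  case/card_gt1P => x [y]; rewrite !inE => -[sx sy xy].
  by have [x0 | ] := eqVneq x 0; [exists y; rewrite // -x0 eq_sym | exists x].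
exists a => //.
apply/esym/eqP; rewrite eqEcard card_S card_imset ?card_ord ?leqnn ?andbT.
  by apply/subsetP => _ /imsetP [i _ ->]; rewrite inE singularMn.
by move=> i j /(mulrn_ord_inj p_prime a0 (ltn_ord i) (ltn_ord j)) /val_inj.
Qed.

(* Halving a non-singular pair {y, y'} about the singular element (y + y')/2
   gives an element beta whose block, and that of each of its multiples,
   is inverse-closed. *)
Lemma exists_beta : exists2 b : GT p, ~~ singular b &
  forall j, (0 < j)%N -> (j < p)%N -> - (b *+ j) \in blk (b *+ j).
Proof.
have [y nsy] : exists y, ~~ singular y.
  apply/existsP; apply: contraT; rewrite negb_exists => /forallP all_sing.
  have : #|[set x | singular x]| = #|{: GT p}|.
    by rewrite -cardsT; apply: eq_card => x; rewrite !inE; apply/negPn.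
  rewrite card_singular // card_singP card_GT // => /eqP.
  by rewrite -{1}(muln1 p) eqn_pmul2l ?prime_gt0 // eq_sym gtn_eqF ?prime_gt1.
have [y' y'y blk_y] := nonsingular_pair unitalP pairP nsy.
have y'_in : y' \in blk y by rewrite blk_y !inE eqxx orbT.
have s_sing := pair_sum_singular unitalP pairP oddG nsy y'_in y'y.
set s := y + y' in s_sing.
have [a s_def] := mulrn_coprime_inv s coprime2G.
pose h := - (s *+ a).
have sh : singular h by rewrite singularN // singularMn.
have h2 : h *+ 2 = s by rewrite [RHS]s_def /h mulNrn -!mulrnA mulnC.
have nsb : ~~ singular (y - h) by rewrite nonsingularD // singularN.
have Nb : - (y - h) \in blk (y - h).
  suff -> : - (y - h) = y' - h.
    by have := blk_translate unitalP pairP (singularN unitalP sh) nsy y'_in.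
  apply/eqP; rewrite opprB subr_eq addrAC eq_sym subr_eq -mulr2n h2.
  by rewrite addrC.
exists (y - h) => // j; elim: j => [|[|j] IH] // _ jp.
have nsbj k : (0 < k)%N -> (k < p)%N -> ~~ singular ((y - h) *+ k).
  by move=> k_gt0 k_lt; apply: nonsingular_mulrn => //; apply: ndvdn_lt.
rewrite mulrSr; apply: (blk_opp_add unitalP pairP oddG (IH isT (ltnW jp)) Nb) => //.
- exact: nsbj (ltnW jp).
- by rewrite -mulrSr; apply: nsbj.
Qed.

Lemma singular_mulrn_diff b (j j' : nat) : ~~ singular b ->
  (j < p)%N -> (j' < p)%N -> singular (b *+ j - b *+ j') -> j = j'.
Proof.
move=> nsb; wlog le_j'j : j j' / (j' <= j)%N.
  move=> wlog_jj jp j'p sdiff.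
  case: (leqP j' j) => [|/ltnW] le; first exact: wlog_jj.
  by apply/esym/wlog_jj => //; rewrite -opprB singularN.
move=> jp j'p; rewrite -mulrnBr //; apply: contraTeq => neq.
apply: nonsingular_mulrn nsb; apply: ndvdn_lt (leq_ltn_trans (leq_subr _ _) jp).
by rewrite subn_gt0 ltn_neqAle eq_sym neq le_j'j.
Qed.

(* Every element is uniquely a *+ i + b *+ j with i, j < p; we only need
   existence, which follows from injectivity by counting. *)
Lemma decomposition a b : a != 0 -> singular a -> ~~ singular b ->
  forall x : GT p, exists i : 'I_p, exists j : 'I_p, x = a *+ i + b *+ j.
Proof.
move=> a0 sa nsb x; pose f (ij : 'I_p * 'I_p) := a *+ ij.1 + b *+ ij.2.
have f_inj : injective f.
  move=> [i j] [i' j']; rewrite /f /= => eqf.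
  have eq_j : j = j'.
    apply/val_inj/(singular_mulrn_diff nsb (ltn_ord j) (ltn_ord j')).
    rewrite -(addKr (a *+ i) (b *+ j)) eqf addrA addrK.
    by rewrite singularD ?singularN ?singularMn.
  move: eqf; rewrite eq_j => /addIr.
  by move/(mulrn_ord_inj p_prime a0 (ltn_ord i) (ltn_ord i'))/val_inj ->.
have card_le : (#|{: GT p}| <= #|{: 'I_p * 'I_p}|)%N.
  by rewrite card_GT // card_prod card_ord.
by have /codomP [[i j] ->] := inj_card_onto f_inj card_le x; exists i, j.
Qed.

Lemma nonsingular_members a b : a != 0 -> singular a -> ~~ singular b ->
  (forall j, (0 < j)%N -> (j < p)%N -> - (b *+ j) \in blk (b *+ j)) ->
  [set A in P | #|A| != 1%N] =
    [set [set a *+ (nat_of_ord i) + b *+ (nat_of_ord j);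
           a *+ (nat_of_ord i) - b *+ (nat_of_ord j)]
      | i in [set: 'I_p], j in [set j0 : 'I_p | (0 < j0)%N]].
Proof.
move=> a0 sa nsb Nb.
have blk_ij (i : nat) (j : 'I_p) : (0 < j)%N ->
    blk (a *+ i + b *+ j) = [set a *+ i + b *+ j; a *+ i - b *+ j].
  move=> j_gt0; apply: (blk_translate_opp unitalP pairP oddG).
  - exact: singularMn.
  - by apply: nonsingular_mulrn => //; apply: ndvdn_lt.
  - exact: Nb.
apply/setP => A; rewrite inE; apply/andP/imset2P => [[PA nsA] | [i j _]].
  have /set0Pn [x xA] : A != set0 by rewrite -card_gt0 (pairP PA nsA).
  have [i [j x_def]] := decomposition a0 sa nsb x.
  have blk_x : blk x = A := blk_eq unitalP PA xA.
  have j_gt0 : (0 < j)%N.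
    rewrite lt0n; apply: contra nsA => /eqP j0; rewrite -blk_x.
    by move: x_def; rewrite j0 mulr0n addr0 => ->; apply: singularMn.
  by exists i j; rewrite ?inE // -blk_ij // -x_def.
rewrite inE => j_gt0 ->; split; first by rewrite -blk_ij // blk_mem.
rewrite cards2 eqSS eqb0 negbK (inj_eq (addrI _)) eq_sym (opp_neq unitalP oddG) //.
by apply: nonsingular_mulrn => //; apply: ndvdn_lt.
Qed.

End Theorem41.

Unset Implicit Arguments. Set Strict Implicit.

Theorem theorem4p1 (p : nat) (hp : prime p) (hodd : odd p)
  (P : {set {set GT p}}) :
  fusion_partition P ->
  #|singular_sets P| = p ->
  (forall A, A \in P -> #|A| != 1%N -> #|A| = 2%N) ->
  exists alpha beta : GT p,
    singular_sets P = [set [set alpha *+ (nat_of_ord i)] | i : 'I_p] /\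
    [set A in P | #|A| != 1%N] =
      [set [set alpha *+ (nat_of_ord i) + beta *+ (nat_of_ord j);
             alpha *+ (nat_of_ord i) - beta *+ (nat_of_ord j)]
        | i in [set: 'I_p], j in [set j0 : 'I_p | (0 < j0)%N]].
Proof.
move=> [unitalP _] card_singP pairP.
have [a a0 singularE] := singular_multiples hp unitalP card_singP.
have [b nsb Nb] := exists_beta hp hodd unitalP pairP card_singP.
have sa : singular P a.
  by rewrite -in_set singularE; apply/imsetP; exists (Ordinal (prime_gt1 hp)).
exists a, b; split; last exact: nonsingular_members.
by rewrite (singular_setsE unitalP) singularE -imset_comp.
Qed.
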